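(* On finite open graphs, the relation $\preceq$ is a well-founded, confluent partial order up to graph isomorphism. That is: (i) $G \preceq G$; if $K \preceq H$ and $H \preceq G$ then $K \preceq G$; if $H \preceq G$ and $G \preceq H$ then $G \cong H$; (ii) there is no infinite sequence $G_0 \succ G_1 \succ G_2 \succ \cdots$ in which each $G_{i+1} \preceq G_i$ with $G_{i+1} \not\cong G_i$; (iii) if $H_1 \preceq G$ and $H_2 \preceq G$, then there is an open graph $K$ with $K \preceq H_1$ and $K \preceq H_2$.
   Context: A pre-open graph $G$ consists of a set $E_G$ of edges, two disjoint sets $V_G$ (vertices) and $\epsilon_G$ (edge points), and two maps $s_G, t_G : E_G \to V_G \sqcup \epsilon_G$ (source and target). A morphism $f: G \to H$ of pre-open graphs consists of a map $E_G \to E_H$ and a map $V_G \sqcup \epsilon_G \to V_H \sqcup \epsilon_H$ sending $V_G$ into $V_H$ and $\epsilon_G$ into $\epsilon_H$, commuting with sources and targets. A pre-open graph is an open graph if the restriction of $s_G$ to $s_G^{-1}(\epsilon_G)$ and the restriction of $t_G$ to $t_G^{-1}(\epsilon_G)$ are injective (so each edge point has at most one incoming and at most one outgoing edge). It is finite if $E_G, V_G, \epsilon_G$ are finite. Contraction: given an edge point $p$ with an in-edge $e_1$ from $x_1$ to $p$ and an out-edge $e_2 \neq e_1$ from $p$ to $x_2$ (where $x_1,x_2 \in V_G \sqcup \epsilon_G$ need not be distinct), one may replace $e_1, p, e_2$ by a single new edge $e_3$ from $x_1$ to $x_2$. We say $G$ contracts to $H$, written $H \preceq G$, if $H$ is isomorphic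 to a graph obtained from $G$ by performing any number (possibly zero) of such replacements. *)

From mathcomp Require Import all_boot.
Set Implicit Arguments. Unset Strict Implicit. Unset Printing Implicit Defensive.

(** A finite pre-open graph: finite sets of edges, vertices and edge points
    (vertices and edge points are disjoint: they are the two summands of
    [vert + epoint]), with source and target maps. *)
Record graph := Graph {
  edge : finType;
  vert : finType;
  epoint : finType;
  src : edge -> (vert + epoint)%type;
  tgt : edge -> (vert + epoint)%type }.

Definition open_graph (G : graph) : Prop :=
  (forall (e e' : edge G) (p : epoint G),
      src e = inr p -> src e' = inr p -> e = e') /\
  (forall (e e' : edge G) (p : epoint G),
      tgt e = inr p -> tgt e' = inr p -> e = e').

Definition map_end (V P V' P' : Type) (fV : V -> V') (fP : P -> P')
  (x : (V + P)%type) : (V' + P')%type :=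
  match x with inl v => inl (fV v) | inr p => inr (fP p) end.

Definition iso (G H : graph) : Prop :=
  exists (fE : edge G -> edge H) (fV : vert G -> vert H)
         (fP : epoint G -> epoint H),
    [/\ bijective fE, bijective fV, bijective fP &
      forall e, src (fE e) = map_end fV fP (src e) /\
                tgt (fE e) = map_end fV fP (tgt e)].

(** Data for one contraction: an edge point p, its in-edge e1 (ending at p)
    and its out-edge e2 (starting at p), e1 <> e2, and these are the only
    edges incident to p (automatic in an open graph). *)
Record cdata (G : graph) := CData {
  cp : epoint G;
  ce1 : edge G;
  ce2 : edge G;
  c_in : tgt ce1 = inr cp;
  c_out : src ce2 = inr cp;
  c_ne : ce1 != ce2;
  c_in_uniq : forall e, tgt e = inr cp -> e = ce1;
  c_out_uniq : forall e, src e = inr cp -> e = ce2 }.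

Section Contract.
Variables (G : graph) (d : cdata G).

Definition c_edge := ({e : edge G | (e != ce1 d) && (e != ce2 d)} + unit)%type.
Definition c_epoint := {q : epoint G | q != cp d}.

Lemma inr_neq (q : epoint G) :
  (inr q : (vert G + epoint G)%type) != inr (cp d) -> q != cp d.
Proof. by apply: contra => /eqP ->. Qed.

Definition c_proj (x : (vert G + epoint G)%type) :
  x != inr (cp d) -> (vert G + c_epoint)%type :=
  match x as y return y != inr (cp d) -> (vert G + c_epoint)%type with
  | inl v => fun _ => inl v
  | inr q => fun h => inr (exist _ q (inr_neq h))
  end.

Lemma src_old (e : {e : edge G | (e != ce1 d) && (e != ce2 d)}) :
  src (val e) != inr (cp d).
Proof.
case: e => e /= /andP [_ h2]; apply/eqP => h.
by move: h2; rewrite (c_out_uniq h) eqxx.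
Qed.

Lemma tgt_old (e : {e : edge G | (e != ce1 d) && (e != ce2 d)}) :
  tgt (val e) != inr (cp d).
Proof.
case: e => e /= /andP [h1 _]; apply/eqP => h.
by move: h1; rewrite (c_in_uniq h) eqxx.
Qed.

Lemma src_e1 : src (ce1 d) != inr (cp d).
Proof.
apply/eqP => h; move: (c_ne d); by rewrite (c_out_uniq h) eqxx.
Qed.

Lemma tgt_e2 : tgt (ce2 d) != inr (cp d).
Proof.
apply/eqP => h; move: (c_ne d); by rewrite (c_in_uniq h) eqxx.
Qed.

(** The new edge e3 (the [inr tt] edge) goes from the source of e1 to the
    target of e2; e1, e2 and p are removed. *)
Definition c_src (x : c_edge) : (vert G + c_epoint)%type :=
  match x with inl e => c_proj (src_old e) | inr _ => c_proj src_e1 end.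
Definition c_tgt (x : c_edge) : (vert G + c_epoint)%type :=
  match x with inl e => c_proj (tgt_old e) | inr _ => c_proj tgt_e2 end.

Definition contract : graph :=
  @Graph c_edge (vert G) c_epoint c_src c_tgt.
End Contract.

Inductive reaches (G : graph) : graph -> Prop :=
| reaches_refl : reaches G G
| reaches_step (H : graph) (d : cdata H) : reaches G H -> reaches G (contract d).

Definition preceq (H G : graph) : Prop := exists G', reaches G G' /\ iso H G'.

(* An edge of a graph reached from [G] by contractions stands for a path of
   [G] through edge points; up to isomorphism, such a graph is determined by
   the (first edge, last edge) pairs of these paths and by its surviving edge
   points.  In these terms two contractions at distinct edge points commute,
   unless the two points form a 2-cycle, where each contraction leaves a single
   loop and the results are isomorphic.  Every contraction removes an edge, so
   Newman's argument by induction on the number of edges turns this local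
   confluence into confluence, and the edge count also gives antisymmetry and
   well-foundedness.  Openness is only needed to be preserved: [cdata] itself
   requires the contracted edge point to have a single in- and out-edge. *)

From mathcomp Require Import all_boot.
From Stdlib Require Import Setoid.
Set Implicit Arguments. Unset Strict Implicit. Unset Printing Implicit Defensive.

Lemma map_end_inj V P V' P' (fV : V -> V') (fP : P -> P') :
  injective fV -> injective fP -> injective (map_end fV fP).
Proof. by move=> iV iP [x|x] [y|y] //= [] => [/iV|/iP] ->. Qed.

Lemma map_end_comp V P V' P' V'' P'' (f1 : V -> V') (f2 : P -> P')
    (g1 : V' -> V'') (g2 : P' -> P'') x :
  map_end g1 g2 (map_end f1 f2 x) = map_end (g1 \o f1) (g2 \o f2) x.
Proof. by case: x. Qed.

Lemma map_end_id V P (fV : V -> V) (fP : P -> P) x :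
  fV =1 id -> fP =1 id -> map_end fV fP x = x.
Proof. by case: x => y /= h1 h2; rewrite ?h1 ?h2. Qed.

Lemma iso_refl G : iso G G.
Proof.
exists id, id, id; split; try by exists id.
by move=> e; rewrite !map_end_id.
Qed.

Lemma iso_sym G H : iso G H -> iso H G.
Proof.
case=> fE [fV [fP [[gE E1 E2] [gV V1 V2] [gP P1 P2] Hc]]].
exists gE, gV, gP; split; [by exists fE | by exists fV | by exists fP|].
move=> e; have iM := map_end_inj (can_inj V1) (can_inj P1).
by split; apply: iM; rewrite map_end_comp map_end_id // -?(proj1 (Hc _))
  -?(proj2 (Hc _)) E2.
Qed.

Lemma iso_trans G H K : iso G H -> iso H K -> iso G K.
Proof.
case=> fE [fV [fP [bE bV bP Hc]]]; case=> gE [gV [gP [cE cV cP Hc']]].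
exists (gE \o fE), (gV \o fV), (gP \o fP); split; try exact: bij_comp.
move=> e /=; rewrite (proj1 (Hc' _)) (proj2 (Hc' _)) (proj1 (Hc _)) (proj2 (Hc _)).
by rewrite !map_end_comp.
Qed.

Lemma iso_card_edge G H : iso G H -> #|edge G| = #|edge H|.
Proof. by case=> fE [fV [fP [bE _ _ _]]]; exact: bij_eq_card bE. Qed.

Lemma iso_of_inj G H (fE : edge G -> edge H) (fV : vert G -> vert H)
    (fP : epoint G -> epoint H) :
  injective fE -> bijective fV -> injective fP ->
  #|edge G| = #|edge H| -> #|epoint G| = #|epoint H| ->
  (forall e, src (fE e) = map_end fV fP (src e) /\
             tgt (fE e) = map_end fV fP (tgt e)) -> iso G H.
Proof.
move=> iE bV iP cE cP Hc; exists fE, fV, fP.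
split=> //; first by apply: (inj_card_bij iE); rewrite cE.
by apply: (inj_card_bij iP); rewrite cP.
Qed.

Lemma card_contract_edge G (d : cdata G) : #|edge (contract d)| = #|edge G|.-1.
Proof.
rewrite /= /c_edge card_sum card_unit card_sig.
have := cardD1 (ce2 d) (predC1 (ce1 d)); rewrite cardC1 inE eq_sym (c_ne d) /=.
move=> ->; rewrite addnC; congr (_ + _); apply: eq_card => x.
by rewrite !inE andbC.
Qed.

Lemma card_contract_epoint G (d : cdata G) :
  #|epoint (contract d)| = #|epoint G|.-1.
Proof. by rewrite /= /c_epoint card_sig -(cardC1 (cp d)); apply: eq_card. Qed.

Lemma card_contract_edge_lt G (d : cdata G) : #|edge (contract d)| < #|edge G|.
Proof.
by rewrite card_contract_edge ltn_predL; apply/card_gt0P; exists (ce1 d).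
Qed.

Lemma reaches_trans G H K : reaches G H -> reaches H K -> reaches G K.
Proof. by move=> hGH; elim=> // K' d _; exact: reaches_step. Qed.

Lemma reaches_first_step G H : reaches G H ->
  G = H \/ exists d : cdata G, reaches (contract d) H.
Proof.
elim=> [|H' d _ [E|[d' hd]]]; first by left.
- by subst H'; right; exists d; exact: reaches_refl.
- by right; exists d'; exact: reaches_step.
Qed.

Lemma reaches_card_edge_lt G H : reaches G H -> G = H \/ #|edge H| < #|edge G|.
Proof.
elim=> [|H' d _ [E|lt]]; [by left | right..].
- by subst H'; exact: card_contract_edge_lt.
- exact: ltn_trans (card_contract_edge_lt d) lt.
Qed.

Lemma reaches_card_edge_le G H : reaches G H -> #|edge H| <= #|edge G|.
Proof. by case/reaches_card_edge_lt => [->|/ltnW]. Qed.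

(* A realization of [H] in [G] reads each edge of [H] as a path of [G] that
   runs through edge points only, and records its first and last edges. *)
Record realization (G H : graph) := Realization {
  rvert : vert H -> vert G;
  rpoint : epoint H -> epoint G;
  rfirst : edge H -> edge G;
  rlast : edge H -> edge G;
  rvert_bij : bijective rvert;
  rpoint_inj : injective rpoint;
  rfirst_inj : injective rfirst;
  rlast_inj : injective rlast;
  src_rfirst : forall e, src (rfirst e) = map_end rvert rpoint (src e);
  tgt_rlast : forall e, tgt (rlast e) = map_end rvert rpoint (tgt e) }.
Arguments rvert_bij {G H} r.
Arguments rpoint_inj {G H} r [x1 x2].
Arguments rfirst_inj {G H} r [x1 x2].
Arguments rlast_inj {G H} r [x1 x2].

Definition realized_edge G H (r : realization G H) g h :=
  exists e, rfirst r e = g /\ rlast r e = h.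
Definition realized_point G H (r : realization G H) x := exists q, rpoint r q = x.

Lemma realization_src G H (r : realization G H) e y :
  src (rfirst r e) = map_end (rvert r) (rpoint r) y -> src e = y.
Proof.
move=> h; apply: (map_end_inj (bij_inj (rvert_bij r)) (rpoint_inj r)).
by rewrite -src_rfirst.
Qed.

Lemma realization_tgt G H (r : realization G H) e y :
  tgt (rlast r e) = map_end (rvert r) (rpoint r) y -> tgt e = y.
Proof.
move=> h; apply: (map_end_inj (bij_inj (rvert_bij r)) (rpoint_inj r)).
by rewrite -tgt_rlast.
Qed.

(* [tau] relabels the edge points of [G]; it is needed for a 2-cycle, whose
   two contractions keep different edge points. *)
Lemma realization_iso_along G H1 H2 (r1 : realization G H1)
    (r2 : realization G H2) (tau : (vert G + epoint G)%type -> (vert G + epoint G)%type)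
    (fE : edge H1 -> edge H2) (fP : epoint H1 -> epoint H2) :
  #|edge H1| = #|edge H2| -> #|epoint H1| = #|epoint H2| ->
  injective fE -> injective fP ->
  (forall v, tau (inl v) = inl v) ->
  (forall q, inr (rpoint r2 (fP q)) = tau (inr (rpoint r1 q))) ->
  (forall e, src (rfirst r2 (fE e)) = tau (src (rfirst r1 e)) /\
             tgt (rlast r2 (fE e)) = tau (tgt (rlast r1 e))) -> iso H1 H2.
Proof.
move=> cE cP iE iP tauV tauP Hc; have [iV2 V2K K2V] := rvert_bij r2.
apply: (@iso_of_inj _ _ fE (iV2 \o rvert r1) fP) => //.
  by apply: bij_comp; [exists (rvert r2) | exact: rvert_bij].
have tau_map x : map_end (rvert r2) (rpoint r2) (map_end (iV2 \o rvert r1) fP x) =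
    tau (map_end (rvert r1) (rpoint r1) x).
  by case: x => y /=; rewrite ?K2V ?tauV ?tauP.
have iM := map_end_inj (bij_inj (rvert_bij r2)) (rpoint_inj r2).
move=> e; have [Hs Ht] := Hc e; split; apply: iM.
- by rewrite -src_rfirst tau_map -src_rfirst Hs.
- by rewrite -tgt_rlast tau_map -tgt_rlast Ht.
Qed.

Lemma realization_iso G H1 H2 (r1 : realization G H1) (r2 : realization G H2) :
  #|edge H1| = #|edge H2| -> #|epoint H1| = #|epoint H2| ->
  (forall g h, realized_edge r1 g h -> realized_edge r2 g h) ->
  (forall x, realized_point r1 x -> realized_point r2 x) -> iso H1 H2.
Proof.
move=> cE cP sub_edge sub_point.
have exE e : exists e', (rfirst r2 e' == rfirst r1 e) && (rlast r2 e' == rlast r1 e).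
  have [e' [E1 E2]] : realized_edge r2 (rfirst r1 e) (rlast r1 e).
    by apply: sub_edge; exists e.
  by exists e'; rewrite E1 E2 !eqxx.
have exP q : exists q', rpoint r2 q' == rpoint r1 q.
  have [q' E] : realized_point r2 (rpoint r1 q) by apply: sub_point; exists q.
  by exists q'; rewrite E.
pose fE e := xchoose (exE e); pose fP q := xchoose (exP q).
have fEP e : rfirst r2 (fE e) = rfirst r1 e /\ rlast r2 (fE e) = rlast r1 e.
  by have /andP [/eqP -> /eqP ->] := xchooseP (exE e).
have fPP q : rpoint r2 (fP q) = rpoint r1 q by apply/eqP; exact: xchooseP (exP q).
apply: (@realization_iso_along _ _ _ r1 r2 id fE fP) => //.
- by move=> e e' h; apply: (rfirst_inj r1); rewrite -!(proj1 (fEP _)) h.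
- by move=> q q' h; apply: (rpoint_inj r1); rewrite -!fPP h.
- by move=> q; rewrite fPP.
- by move=> e; rewrite (proj1 (fEP e)) (proj2 (fEP e)).
Qed.

Definition realization_id G : realization G G.
Proof.
apply: (@Realization G G id id id id) => //; first by exists id.
- by move=> e; rewrite map_end_id.
- by move=> e; rewrite map_end_id.
Defined.

Lemma realized_edge_id G g h : realized_edge (realization_id G) g h <-> g = h.
Proof. by split=> [[e [<- <-]] | ->]; last exists h. Qed.

(* The effect of a contraction on the (first edge, last edge) pairs of a
   realization: the pairs starting with [a] and [b] merge into [(a, b')]. *)
Definition splice (T : eqType) (R : T -> T -> Prop) (a b b' : T) (g h : T) :=
  (R g h /\ g != a /\ g != b) \/ (g = a /\ h = b').

Section RealizationContract.
Variables (G H : graph) (r : realization G H) (d : cdata H).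

Definition rcpoint (q : c_epoint d) : epoint G := rpoint r (val q).
Definition rcfirst (x : c_edge d) : edge G :=
  if x is inl e then rfirst r (val e) else rfirst r (ce1 d).
Definition rclast (x : c_edge d) : edge G :=
  if x is inl e then rlast r (val e) else rlast r (ce2 d).

Lemma map_end_c_proj (x : (vert H + epoint H)%type) (h : x != inr (cp d)) :
  map_end (rvert r) rcpoint (c_proj h) = map_end (rvert r) (rpoint r) x.
Proof. by case: x h. Qed.

Lemma rcpoint_inj : injective rcpoint.
Proof. by move=> q q' /(rpoint_inj r) /val_inj. Qed.

Lemma rcfirst_inj : injective rcfirst.
Proof.
have iF := rfirst_inj r.
case=> [e|[]] [e'|[]] //= => [/iF/val_inj->//| /iF E | /iF E].
- by move: (valP e) => /=; rewrite E eqxx.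
- by move: (valP e') => /=; rewrite -E eqxx.
Qed.

Lemma rclast_inj : injective rclast.
Proof.
have iL := rlast_inj r.
case=> [e|[]] [e'|[]] //= => [/iL/val_inj->//| /iL E | /iL E].
- by move: (valP e) => /=; rewrite E eqxx andbF.
- by move: (valP e') => /=; rewrite -E eqxx andbF.
Qed.

Definition realization_contract : realization G (contract d).
Proof.
apply: (@Realization G (contract d) (rvert r) rcpoint rcfirst rclast
  (rvert_bij r) rcpoint_inj rcfirst_inj rclast_inj).
- by case=> [e|[]] /=; rewrite map_end_c_proj src_rfirst.
- by case=> [e|[]] /=; rewrite map_end_c_proj tgt_rlast.
Defined.

Lemma realized_edge_contract g h : realized_edge realization_contract g h <->
  splice (realized_edge r) (rfirst r (ce1 d)) (rfirst r (ce2 d)) (rlast r (ce2 d)) g h.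
Proof.
have iF := rfirst_inj r; rewrite /splice; split.
- case=> [[e|[]] [<- <-]] /=; last by right.
  left; split; first by exists (val e).
  by case/andP: (valP e) => h1 h2; split; [apply: contra_neq h1 | apply: contra_neq h2];
    exact: iF.
- case=> [[[e [<- <-]] [h1 h2]]|[-> ->]]; last by exists (inr tt).
  have P : (e != ce1 d) && (e != ce2 d).
    by apply/andP; split; [apply: contra_neq h1 | apply: contra_neq h2] => ->.
  by exists (inl (exist _ e P)).
Qed.

Lemma realized_point_contract x : realized_point realization_contract x <->
  realized_point r x /\ x != rpoint r (cp d).
Proof.
split.
- case=> q <-; split; first by exists (val q).
  by apply: contra_neq (valP q) => /(rpoint_inj r).
- case=> [[q <-] h]; have P : q != cp d by apply: contra_neq h => ->.
  by exists (exist _ q P).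
Qed.

End RealizationContract.

Definition contract_realization G (d : cdata G) :=
  realization_contract (realization_id G) d.

Lemma realized_edge_contract_realization G (d : cdata G) g h :
  realized_edge (contract_realization d) g h <->
  splice eq (ce1 d) (ce2 d) (ce2 d) g h.
Proof. by rewrite realized_edge_contract /splice realized_edge_id. Qed.

Lemma iso_contract G G' (d : cdata G) : iso G G' ->
  exists d' : cdata G', iso (contract d) (contract d').
Proof.
case=> fE [fV [fP [bE bV bP Hc]]]; have iE := bij_inj bE; have iP := bij_inj bP.
have [gE _ fEK] := bE.
pose r := Realization bV iP iE iE (fun e => proj1 (Hc e)) (fun e => proj2 (Hc e)).
have cin : tgt (fE (ce1 d)) = inr (fP (cp d)) by rewrite (proj2 (Hc _)) c_in.
have cout : src (fE (ce2 d)) = inr (fP (cp d)) by rewrite (proj1 (Hc _)) c_out.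
have cne : fE (ce1 d) != fE (ce2 d) by rewrite (inj_eq iE) c_ne.
have cinu e : tgt e = inr (fP (cp d)) -> e = fE (ce1 d).
  rewrite -(fEK e) (proj2 (Hc _)); case E: (tgt (gE e)) => [v|q] //= [/iP qE].
  by rewrite (@c_in_uniq _ d (gE e)) // E qE.
have coutu e : src e = inr (fP (cp d)) -> e = fE (ce2 d).
  rewrite -(fEK e) (proj1 (Hc _)); case E: (src (gE e)) => [v|q] //= [/iP qE].
  by rewrite (@c_out_uniq _ d (gE e)) // E qE.
exists (CData cin cout cne cinu coutu).
apply: (@realization_iso _ _ _ (realization_contract r d) (contract_realization _)).
- by rewrite !card_contract_edge (bij_eq_card bE).
- by rewrite !card_contract_epoint (bij_eq_card bP).
- move=> g h /realized_edge_contract [[[e [<- <-]] ne] | eq_gh];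
    apply/realized_edge_contract; [left | right] => //.
  by split; first exact/realized_edge_id.
- move=> x /realized_point_contract [_ h]; apply/realized_point_contract.
  by split => //; exists x.
Qed.

Lemma reaches_iso G G' H : iso G G' -> reaches G H ->
  exists H', reaches G' H' /\ iso H H'.
Proof.
move=> iGG'; elim=> [|H0 d _ [H0' [rH0' iH0]]].
  by exists G'; split; [exact: reaches_refl|].
have [d' iHd'] := iso_contract d iH0.
by exists (contract d'); split; [exact: reaches_step|].
Qed.

Lemma open_contract G (d : cdata G) : open_graph G -> open_graph (contract d).
Proof.
case=> src_inj tgt_inj; pose r := contract_realization d.
split=> e e' p E E'.
- apply: (rfirst_inj r); apply: (src_inj _ _ (val p)).
  + by rewrite (src_rfirst r) E.
  + by rewrite (src_rfirst r) E'.
- apply: (rlast_inj r); apply: (tgt_inj _ _ (val p)).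
  + by rewrite (tgt_rlast r) E.
  + by rewrite (tgt_rlast r) E'.
Qed.

Lemma open_reaches G H : open_graph G -> reaches G H -> open_graph H.
Proof. by move=> oG; elim=> // H' d _; exact: open_contract. Qed.

Definition contract_edge_of G (d : cdata G) (e : edge G) : edge (contract d) :=
  if insub e is Some x then inl x else inr tt.

Lemma rfirst_contract_edge_of G (d : cdata G) e :
  rfirst (contract_realization d) (contract_edge_of d e) =
  if (e != ce1 d) && (e != ce2 d) then e else ce1 d.
Proof.
rewrite /contract_edge_of; case: insubP => [u hu E|hn] /=; first by rewrite hu -E.
by rewrite (negbTE hn).
Qed.

Lemma rlast_contract_edge_of G (d : cdata G) e :
  rlast (contract_realization d) (contract_edge_of d e) =
  if (e != ce1 d) && (e != ce2 d) then e else ce2 d.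
Proof.
rewrite /contract_edge_of; case: insubP => [u hu E|hn] /=; first by rewrite hu -E.
by rewrite (negbTE hn).
Qed.

Lemma cdata_in_neq G (d1 d2 : cdata G) : cp d1 != cp d2 -> ce1 d1 != ce1 d2.
Proof. by apply: contra_neq => E; move: (c_in d1); rewrite E c_in => -[]. Qed.

Lemma cdata_out_neq G (d1 d2 : cdata G) : cp d1 != cp d2 -> ce2 d1 != ce2 d2.
Proof. by apply: contra_neq => E; move: (c_out d1); rewrite E c_out => -[]. Qed.

Lemma contract_same_point G (d1 d2 : cdata G) :
  cp d1 = cp d2 -> iso (contract d1) (contract d2).
Proof.
move=> E.
have E1 : ce1 d1 = ce1 d2 by apply: c_in_uniq; rewrite c_in E.
have E2 : ce2 d1 = ce2 d2 by apply: c_out_uniq; rewrite c_out E.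
apply: (@realization_iso _ _ _ (contract_realization d1) (contract_realization d2)).
- by rewrite !card_contract_edge.
- by rewrite !card_contract_epoint.
- by move=> g h /realized_edge_contract; rewrite E1 E2 => /realized_edge_contract.
- by move=> x /realized_point_contract; rewrite E => /realized_point_contract.
Qed.

Lemma contract_two_cycle G (d1 d2 : cdata G) : cp d1 != cp d2 ->
  ce2 d1 = ce1 d2 -> ce1 d1 = ce2 d2 -> iso (contract d1) (contract d2).
Proof.
move=> hp hb ha.
pose tau (y : (vert G + epoint G)%type) :=
  if y == inr (cp d2) then (inr (cp d1) : (vert G + epoint G)%type) else y.
have pP (x : c_epoint d1) : (if val x == cp d2 then cp d1 else val x) != cp d2.
  by case: (val x =P cp d2) => [_|/eqP].
pose fP (x : c_epoint d1) : c_epoint d2 := exist (fun q => q != cp d2) _ (pP x).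
have pE (e : {e : edge G | (e != ce1 d1) && (e != ce2 d1)}) :
    (val e != ce1 d2) && (val e != ce2 d2).
  by rewrite -hb -ha andbC; exact: (valP e).
pose fE (x : c_edge d1) : c_edge d2 :=
  if x is inl e then inl (exist (fun e => (e != ce1 d2) && (e != ce2 d2)) _ (pE e))
  else inr tt.
apply: (@realization_iso_along _ _ _ (contract_realization d1)
  (contract_realization d2) tau fE fP).
- by rewrite !card_contract_edge.
- by rewrite !card_contract_epoint.
- by case=> [e|[]] [e'|[]] //= [] /val_inj ->.
- move=> x y [] /=; case: eqP; case: eqP => // hx hy.
  + by move=> _; apply: val_inj => /=; rewrite hx hy.
  + by move=> E; move: (valP y) => /=; rewrite -E eqxx.
  + by move=> E; move: (valP x) => /=; rewrite E eqxx.
  + by move=> E; apply: val_inj.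
- by [].
- move=> q /=; rewrite /tau /=; case: eqP => [->|]; first by rewrite eqxx.
  by case: eqP => // [[]].
- case=> [e|[]] /=.
  + move: (valP e) => /= /andP [n1 n2].
    rewrite /tau; case: eqP => [/c_out_uniq E|_]; first by move: n1; rewrite E -ha eqxx.
    by case: eqP => [/c_in_uniq E|_] //; move: n2; rewrite E -hb eqxx.
  + by rewrite -hb c_out ha c_out -ha c_in hb c_in /tau eqxx.
Qed.

(* Unless [d1] and [d2] form a 2-cycle, the contraction [d2] survives [d1]; if
   an edge of [d2] is also an edge of [d1], it is now part of the merged edge. *)
Lemma cdata_contract G (d1 d2 : cdata G) : cp d2 != cp d1 ->
  ~~ ((ce2 d1 == ce1 d2) && (ce1 d1 == ce2 d2)) ->
  exists d2' : cdata (contract d1), let r := contract_realization d1 in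
  [/\ rfirst r (ce1 d2') = (if ce1 d2 == ce2 d1 then ce1 d1 else ce1 d2),
      rfirst r (ce2 d2') = ce2 d2,
      rlast r (ce2 d2') = (if ce2 d2 == ce1 d1 then ce2 d1 else ce2 d2) &
      rpoint r (cp d2') = cp d2].
Proof.
move=> hp not_cycle; set r := contract_realization d1.
have ne1 : ce1 d2 != ce1 d1 by apply: cdata_in_neq.
have ne2 : ce2 d2 != ce2 d1 by apply: cdata_out_neq.
set c := ce1 d2 in ne1 not_cycle *; set c' := ce2 d2 in ne2 not_cycle *.
have Lc : rlast r (contract_edge_of d1 c) = c.
  by rewrite rlast_contract_edge_of ne1 /=; case: eqP.
have Fc' : rfirst r (contract_edge_of d1 c') = c'.
  by rewrite rfirst_contract_edge_of ne2 andbT; case: eqP.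
pose q : c_epoint d1 := exist (fun q => q != cp d1) (cp d2) hp.
have cin : tgt (contract_edge_of d1 c) = inr q.
  by apply: (realization_tgt (r := r)); rewrite Lc c_in.
have cout : src (contract_edge_of d1 c') = inr q.
  by apply: (realization_src (r := r)); rewrite Fc' c_out.
have cne : contract_edge_of d1 c != contract_edge_of d1 c'.
  apply/negP => /eqP E; move: (congr1 (rfirst r) E).
  rewrite Fc' rfirst_contract_edge_of ne1 /=.
  case: (c =P ce2 d1) => [cb|/eqP ncb] /= E'; last first.
    by move: (c_ne d2); rewrite -/c -/c' E' eqxx.
  by move: not_cycle; rewrite cb E' !eqxx.
have cinu (x : edge (contract d1)) : tgt x = inr q -> x = contract_edge_of d1 c.
  move=> h; apply: (rlast_inj r); rewrite Lc; apply: c_in_uniq.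
  by rewrite (tgt_rlast r) h.
have coutu (x : edge (contract d1)) : src x = inr q -> x = contract_edge_of d1 c'.
  move=> h; apply: (rfirst_inj r); rewrite Fc'; apply: c_out_uniq.
  by rewrite (src_rfirst r) h.
exists (CData cin cout cne cinu coutu); split => //.
- by rewrite rfirst_contract_edge_of ne1 /=; case: (c =P ce2 d1).
- by rewrite rlast_contract_edge_of ne2 andbT /=; case: (c' =P ce1 d1).
Qed.

(* The bookkeeping behind the commutation of two contractions: [(a, b)] and
   [(c, d)] are the (in-edge, out-edge) pairs of the two edge points. *)
Lemma splice_swap (T : eqType) (a b c d : T) :
  a != b -> c != d -> a != c -> b != d -> ~~ ((b == c) && (a == d)) ->
  forall g h,
  splice (splice eq a b b) (if c == b then a else c) d (if d == a then b else d) g h ->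
  splice (splice eq c d d) (if a == d then c else a) b (if b == c then d else b) g h.
Proof.
move=> ab cd ac bd not_cycle g h; rewrite /splice.
have ca : c != a by rewrite eq_sym.
have db : d != b by rewrite eq_sym.
case: (c =P b) => [cb|/eqP ncb]; case: (d =P a) => [da|/eqP nda].
- by move: not_cycle; rewrite cb da !eqxx.
- subst c; have ad : a != d by rewrite eq_sym.
  rewrite eqxx (negbTE ad).
  move=> [[[[gh [ga gb]]|[ga hb]] [n1 n2]]|[ga hd]].
  + by left; split; [left|].
  + by move: n1; rewrite ga eqxx.
  + by right.
- subst d; have bc : b != c by rewrite eq_sym.
  rewrite eqxx (negbTE bc).
  move=> [[[[gh [ga gb]]|[ga hb]] [n1 n2]]|[gc hb]].
  + by left; split; [left|].
  + by move: n2; rewrite ga eqxx.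
  + by right.
- have ad : a != d by rewrite eq_sym.
  have bc : b != c by rewrite eq_sym.
  rewrite (negbTE ad) (negbTE bc).
  move=> [[[[gh [ga gb]]|[ga hb]] [n1 n2]]|[gc hd]].
  + by left; split; [left|].
  + by right.
  + by left; split; [right|]; rewrite gc // eq_sym.
Qed.

Lemma realized_edge_contract2 G (d : cdata G) (d' : cdata (contract d)) g h :
  let r := contract_realization d in
  realized_edge (realization_contract r d') g h <->
  splice (splice eq (ce1 d) (ce2 d) (ce2 d))
    (rfirst r (ce1 d')) (rfirst r (ce2 d')) (rlast r (ce2 d')) g h.
Proof.
by rewrite /= realized_edge_contract /splice realized_edge_contract_realization.
Qed.

Definition joinable H1 H2 :=
  exists K1 K2, reaches H1 K1 /\ reaches H2 K2 /\ iso K1 K2.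

Lemma iso_joinable H1 H2 : iso H1 H2 -> joinable H1 H2.
Proof.
by exists H1, H2; split; [exact: reaches_refl | split; first exact: reaches_refl].
Qed.

Lemma contract_local_confluence G (d1 d2 : cdata G) :
  joinable (contract d1) (contract d2).
Proof.
have [hp|hp] := eqVneq (cp d2) (cp d1).
  by apply/iso_joinable/contract_same_point.
have [/andP [/eqP hb /eqP ha]|not_cycle] :=
  boolP ((ce2 d1 == ce1 d2) && (ce1 d1 == ce2 d2)).
  by apply/iso_joinable/contract_two_cycle; rewrite // eq_sym.
have not_cycle' : ~~ ((ce2 d2 == ce1 d1) && (ce1 d2 == ce2 d1)).
  by rewrite andbC eq_sym [ce2 d2 == _]eq_sym.
have [d2' [F1 F2 L2 P2]] := cdata_contract hp not_cycle.
have hp' : cp d1 != cp d2 by rewrite eq_sym.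
have [d1' [F1' F2' L2' P2']] := cdata_contract hp' not_cycle'.
exists (contract d2'), (contract d1'); split; first exact/reaches_step/reaches_refl.
split; first exact/reaches_step/reaches_refl.
apply: (@realization_iso _ _ _ (realization_contract (contract_realization d1) d2')
  (realization_contract (contract_realization d2) d1')).
- by rewrite !card_contract_edge.
- by rewrite !card_contract_epoint.
- move=> g h; rewrite !realized_edge_contract2 F1 F2 L2 F1' F2' L2'.
  by apply: splice_swap; rewrite ?c_ne ?cdata_in_neq ?cdata_out_neq.
- move=> x; rewrite !realized_point_contract P2 P2' => -[[x_pt x_ne1] x_ne2].
  by split; [split|].
Qed.

Lemma reaches_confluent G H1 H2 : reaches G H1 -> reaches G H2 -> joinable H1 H2.
Proof.
have [n hG] : exists n, #|edge G| < n by exists #|edge G|.+1.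
elim: n G H1 H2 hG => [//|n IH] G H1 H2 hG r1 r2.
case: (reaches_first_step r1) => [<-|[d1 c1]].
  by exists H2, H2; split; [|split; [exact: reaches_refl | exact: iso_refl]].
case: (reaches_first_step r2) => [<-|[d2 c2]].
  by exists H1, H1; split; [exact: reaches_refl | split; [|exact: iso_refl]].
have [D1 [D2 [rD1 [rD2 iD]]]] := contract_local_confluence d1 d2.
have lt1 : #|edge (contract d1)| < n by exact: leq_trans (card_contract_edge_lt d1) hG.
have lt2 : #|edge (contract d2)| < n by exact: leq_trans (card_contract_edge_lt d2) hG.
have [E1 [F1 [rE1 [rF1 iEF1]]]] := IH _ _ _ lt1 c1 rD1.
have [F2 [rF2 iF12]] := reaches_iso iD rF1.
have [E2 [E2' [rE2 [rE2' iE22]]]] := IH _ _ _ lt2 c2 (reaches_trans rD2 rF2).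
have [E1' [rE1' iE2'E1']] := reaches_iso (iso_sym (iso_trans iEF1 iF12)) rE2'.
exists E1', E2; split; first exact: reaches_trans rE1 rE1'.
by split => //; exact: iso_trans (iso_sym iE2'E1') (iso_sym iE22).
Qed.

Lemma preceq_refl G : preceq G G.
Proof. by exists G; split; [exact: reaches_refl | exact: iso_refl]. Qed.

Lemma preceq_trans K H G : preceq K H -> preceq H G -> preceq K G.
Proof.
move=> [H' [rH iK]] [G' [rG iH]]; have [G'' [rG' iH']] := reaches_iso iH rH.
by exists G''; split; [exact: reaches_trans rG rG' | exact: iso_trans iK iH'].
Qed.

Lemma preceq_card_edge H G : preceq H G -> #|edge H| <= #|edge G|.
Proof. by case=> G' [rG /iso_card_edge ->]; exact: reaches_card_edge_le. Qed.

Lemma preceq_card_edge_lt H G :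
  preceq H G -> ~ iso H G -> #|edge H| < #|edge G|.
Proof.
case=> G' [rG iH] not_iso; rewrite (iso_card_edge iH).
by case: (reaches_card_edge_lt rG) => // E; rewrite E in not_iso.
Qed.

Lemma preceq_antisym H G : preceq H G -> preceq G H -> iso G H.
Proof.
move=> [G' [rG iH]] GH; case: (reaches_card_edge_lt rG) => [E|lt].
  by rewrite E; exact: iso_sym.
by move: (preceq_card_edge GH); rewrite (iso_card_edge iH) leqNgt lt.
Qed.

Lemma preceq_no_descending_chain (f : nat -> graph) :
  ~ (forall i, preceq (f i.+1) (f i) /\ ~ iso (f i.+1) (f i)).
Proof.
move=> hf; have desc i : #|edge (f i)| + i <= #|edge (f 0)|.
  elim: i => [|i IHi]; first by rewrite addn0.
  apply: leq_trans IHi; rewrite addnS -addSn leq_add2r.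
  by have [HG not_iso] := hf i; exact: preceq_card_edge_lt.
by have := desc (#|edge (f 0)|).+1; rewrite addnS ltnNge leq_addl.
Qed.

Lemma preceq_confluent G H1 H2 : open_graph G -> preceq H1 G -> preceq H2 G ->
  exists K, open_graph K /\ preceq K H1 /\ preceq K H2.
Proof.
move=> oG [H1' [r1 i1]] [H2' [r2 i2]].
have [K1 [K2 [rK1 [rK2 iK]]]] := reaches_confluent r1 r2.
have [K1' [rK1' iK1']] := reaches_iso (iso_sym i1) rK1.
have [K2' [rK2' iK2']] := reaches_iso (iso_sym i2) rK2.
exists K1; split; first exact: open_reaches (open_reaches oG r1) rK1.
split; first by exists K1'.
by exists K2'; split => //; exact: iso_trans iK iK2'.
Qed.

Theorem proposition1 :
  (forall G : graph, open_graph G -> preceq G G) /\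
  (forall K H G : graph, open_graph K -> open_graph H -> open_graph G ->
     preceq K H -> preceq H G -> preceq K G) /\
  (forall H G : graph, open_graph H -> open_graph G ->
     preceq H G -> preceq G H -> iso G H) /\
  ~ (exists f : nat -> graph,
       (forall i, open_graph (f i)) /\
       (forall i, preceq (f i.+1) (f i) /\ ~ iso (f i.+1) (f i))) /\
  (forall G H1 H2 : graph, open_graph G -> open_graph H1 -> open_graph H2 ->
     preceq H1 G -> preceq H2 G ->
     exists K : graph, open_graph K /\ preceq K H1 /\ preceq K H2).
Proof.
split; first by move=> G _; exact: preceq_refl.
split; first by move=> K H G _ _ _; exact: preceq_trans.
split; first by move=> H G _ _; exact: preceq_antisym.
split; first by case=> f [_]; exact: preceq_no_descending_chain.
by move=> G H1 H2 oG _ _; exact: preceq_confluent.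
Qed.
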